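(* Consider the decentralized Bayesian bandit algorithm described in the context with Gaussian rewards of known variance $\sigma^2$, learning rate $\eta>0$ and prior $\mathcal N(\mu_0,\sigma_0^2)$ on the mean of every arm at every agent. Define $\mu^{(i)}_k(1)=\mu_0$, $\sigma^{(i)}_k(1)=\sigma_0$ and, for $t\ge1$, \[ \tilde\sigma^{(i)}_k(t+1)=\left(\frac{1}{(\sigma^{(i)}_k(t))^2}+\frac{\eta\mathbf 1\{A^{(i)}_t=k\}}{\sigma^2}\right)^{-1/2}, \] \[ \tilde\mu^{(i)}_k(t+1)=\mu^{(i)}_k(t)\left(\frac{\tilde\sigma^{(i)}_k(t+1)}{\sigma^{(i)}_k(t)}\right)^2+\eta Y^{(i)}_t\mathbf 1\{A^{(i)}_t=k\}\left(\frac{\tilde\sigma^{(i)}_k(t+1)}{\sigma}\right)^2, \] \[ \frac{1}{(\sigma^{(i)}_k(t+1))^2}=\sum_{j=1}^N W_{ij}\frac{1}{(\tilde\sigma^{(j)}_k(t+1))^2},\qquad \frac{\mu^{(i)}_k(t+1)}{(\sigma^{(i)}_k(t+1))^2}=\sum_{j=1}^N W_{ij}\frac{\tilde\mu^{(j)}_k(t+1)}{(\tilde\sigma^{(j)}_k(t+1))^2}. \] Then for all $t\ge1$, $i\in[N]$, $k\in[K]$: $\tilde q^{(i)}_{k,t+1}$ is the density of $\mathcal N(\tilde\mu^{(i)}_k(t+1),(\tilde\sigma^{(i)}_k(t+1))^2)$ and $q^{(i)}_{k,t+1}$ is the density of $\mathcal N(\mu^{(i)}_k(t+1),(\sigma^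{(i)}_k(t+1))^2)$.
   Context: $N$ agents; $W\in\mathbb R^{N\times N}$ is a doubly stochastic matrix with nonnegative entries (respecting a connected undirected communication graph). $K$ arms; when agent $i$ plays arm $k$ it observes a reward drawn from $\mathcal N(\theta^*_k,\sigma^2)$ with $\sigma^2$ known. Let $p_\theta$ be the $\mathcal N(\theta,\sigma^2)$ density, $\Theta=\mathbb R$ with Lebesgue measure. Decentralized Bayesian bandit algorithm: each agent $i$ maintains densities $q^{(i)}_{k,t}$, $k\in[K]$, with $q^{(i)}_{k,1}$ equal to the prior density. In round $t$, agent $i$ selects an arm $A^{(i)}_t$ as a function of $(q^{(i)}_{1,t},\dots,q^{(i)}_{K,t})$, observes reward $Y^{(i)}_t$, and forms the tempered posterior $\tilde q^{(i)}_{k,t+1}(\theta)=\frac{q^{(i)}_{k,t}(\theta)p_\theta(Y^{(i)}_t)^\eta}{\int_\Theta q^{(i)}_{k,t}(\phi)p_\phi(Y^{(i)}_t)^\eta d\phi}$ for $k=A^{(i)}_t$, and $\tilde q^{(i)}_{k,t+1}=q^{(i)}_{k,t}$ for $k\neq A^{(i)}_t$. After exchanging with neighbors, each agent sets $q^{(i)}_{k,t+1}(\theta)=\frac{\exp(\sum_{j=1}^N W_{ij}\log\tilde q^{(j)}_{k,t+1}(\theta))}{\int_\Theta\exp(\sum_{j=1}^N W_{ij}\log\tilde q^{(j)}_{k,t+1}(\phi))d\phi}$ for all $k$. *)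

From HB Require Import structures.
From mathcomp Require Import all_boot all_order all_algebra.
From mathcomp Require Import all_classical all_reals all_analysis.
Set Implicit Arguments. Unset Strict Implicit. Unset Printing Implicit Defensive.
Import Order.TTheory GRing.Theory Num.Theory.
Local Open Scope ring_scope.

Section DecBandit.
Variables (R : realType) (N K : nat).

(* State of the algorithm: q i k is the density q^{(i)}_{k} on Theta = R. *)
Definition state := 'I_N -> 'I_K -> R -> R.

Definition normalize (f : R -> R) : R -> R :=
  fun th => f th / Rintegral (@lebesgue_measure R) setT f.

Variables (W : 'M[R]_N) (sigma eta : R)
  (pol : nat -> 'I_N -> ('I_K -> R -> R) -> 'I_K)
  (Y : nat -> 'I_N -> R) (prior : R -> R).

Definition arm (t : nat) (q : state) (i : 'I_N) : 'I_K := pol t i (q i).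

(* tempered posterior \tilde q_{t+1} computed from q = q_t *)
Definition qtilde (t : nat) (q : state) : state := fun i k =>
  if k == arm t q i then
    normalize (fun th => q i k th * powR (normal_pdf th sigma (Y t i)) eta)
  else q i k.

(* geometric averaging step: q_{t+1} computed from q = q_t *)
Definition qnext (t : nat) (q : state) : state := fun i k =>
  normalize (fun th => expR (\sum_(j < N) W i j * ln (qtilde t q j k th))).

(* qseq t = q_t for t >= 1 (qseq 0 is an unused dummy, set to the prior) *)
Fixpoint qseq (t : nat) : state :=
  match t with
  | 0 => fun _ _ => prior
  | t'.+1 => if t' is 0 then fun _ _ => prior else qnext t' (qseq t')
  end.

(* parameters: (mu^{(i)}_k(t), sigma^{(i)}_k(t)) *)
Definition param : Type := (('I_N -> 'I_K -> R) * ('I_N -> 'I_K -> R))%type.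

Variables (mu0 sigma0 : R).

Definition ind (b : bool) : R := if b then 1 else 0.

(* \tilde sigma(t+1) from sigma(t) *)
Definition sigtil (t : nat) (p : param) : 'I_N -> 'I_K -> R := fun i k =>
  powR ((p.2 i k) ^-2 + eta * ind (arm t (qseq t) i == k) / sigma ^+ 2) (- 2^-1).

(* \tilde mu(t+1) from mu(t), sigma(t) *)
Definition mutil (t : nat) (p : param) : 'I_N -> 'I_K -> R := fun i k =>
  p.1 i k * (sigtil t p i k / p.2 i k) ^+ 2
  + eta * Y t i * ind (arm t (qseq t) i == k) * (sigtil t p i k / sigma) ^+ 2.

Definition param_next (t : nat) (p : param) : param :=
  let s := fun i k => powR (\sum_(j < N) W i j * (sigtil t p j k) ^-2) (- 2^-1) in
  (fun i k => (s i k) ^+ 2 * \sum_(j < N) W i j * (mutil t p j k / (sigtil t p j k) ^+ 2),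
   s).

(* pseq t = (mu(t), sigma(t)) for t >= 1 *)
Fixpoint pseq (t : nat) : param :=
  match t with
  | 0 => (fun _ _ => mu0, fun _ _ => sigma0)
  | t'.+1 => if t' is 0 then (fun _ _ => mu0, fun _ _ => sigma0)
             else param_next t' (pseq t')
  end.

End DecBandit.

Definition respects_graph (R : realType) (N : nat) (W : 'M[R]_N) (G : rel 'I_N) :=
  (forall i j, 0 <= W i j) /\
  (forall i, \sum_(j < N) W i j = 1) /\
  (forall j, \sum_(i < N) W i j = 1) /\
  (forall i j, i != j -> W i j != 0 -> G i j) /\
  symmetric G /\ (forall i j, connect G i j).

(* Tempering a Gaussian likelihood and taking a weighted geometric mean of
   Gaussian densities both act linearly on log-densities, so every density of
   the algorithm is proportional to [exp (c - (a x^2 - 2 b x) / 2)] with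
   precision [a > 0]; normalizing such a function gives N(b/a, 1/a).  Reading
   off [a] and [b] yields the update formulas, and induction on [t] propagates
   the Gaussian form. *)
From HB Require Import structures.
From mathcomp Require Import all_boot all_order all_algebra.
From mathcomp Require Import all_classical all_reals all_analysis.
From mathcomp Require Import ring.
Import Order.TTheory GRing.Theory Num.Theory.
Local Open Scope ring_scope.

Lemma powR_Nhalf_sqr (R : realType) (a : R) : 0 < a -> (a `^ (- 2^-1)) ^+ 2 = a^-1.
Proof.
move=> a_gt0; rewrite -powR_mulrn ?powR_ge0// -powRrM.
have -> : - 2^-1 * 2%:R = -1 :> R by field.
by rewrite powR_inv1 // ltW.
Qed.

Lemma powR_Nhalf_Vsqr (R : realType) (s : R) : 0 < s -> (s ^-2) `^ (- 2^-1) = s.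
Proof.
move=> s_gt0; rewrite -[LHS]ger0_norm ?powR_ge0// -sqrtr_sqr.
by rewrite powR_Nhalf_sqr ?invr_gt0 ?exprn_gt0// invrK sqrtr_sqr gtr0_norm.
Qed.

Lemma ln_normal_pdf (R : realType) (m s x : R) : s != 0 ->
  ln (normal_pdf m s x) = ln (normal_peak s) - (x - m) ^+ 2 / (s ^+ 2 * 2).
Proof.
move=> s_neq0; rewrite normal_pdfE// /normal_fun /= lnM ?expRK.
- by rewrite mulNr mulr_natr.
- by rewrite posrE normal_peak_gt0.
- by rewrite posrE expR_gt0.
Qed.

Lemma normal_pdf_gt0 (R : realType) (m s x : R) : s != 0 -> 0 < normal_pdf m s x.
Proof.
by move=> s_neq0; rewrite normal_pdfE// mulr_gt0 ?normal_peak_gt0 ?expR_gt0.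
Qed.

Lemma normalize_expR_quadratic (R : realType) (c a b : R) : 0 < a ->
  normalize (fun x => expR (c - (a * x ^+ 2 - 2 * b * x) / 2))
  = normal_pdf (b / a) (a `^ (- 2^-1)).
Proof.
move=> a_gt0; set s := a `^ (- 2^-1).
have s_neq0 : s != 0 by rewrite gt_eqF ?powR_gt0.
have s2 : s ^+ 2 = a^-1 by apply: powR_Nhalf_sqr.
set C := expR (c + b ^+ 2 / (2 * a)) / normal_peak s.
(* completing the square in [x] *)
have -> : (fun x => expR (c - (a * x ^+ 2 - 2 * b * x) / 2))
          = (fun x => C * normal_pdf (b / a) s x).
  apply/funext => x; rewrite normal_pdfE// /normal_fun /C /=.
  rewrite [RHS]mulrA divfK ?gt_eqF ?normal_peak_gt0// -expRD; congr expR.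
  by rewrite s2 -mulr_natr; field; rewrite gt_eqF.
apply/funext => x; rewrite /normalize RintegralZl//; last exact: integrable_normal_pdf.
rewrite /Rintegral integral_normal_pdf /= mulr1 mulrC mulrA mulVf ?mul1r//.
by rewrite gt_eqF ?divr_gt0 ?expR_gt0 ?normal_peak_gt0.
Qed.

Lemma normalize_normal_tempered (R : realType) (m s y v c : R) :
  0 < s -> 0 < v -> 0 <= c ->
  let S := (s ^-2 + c / v ^+ 2) `^ (- 2^-1) in
  normalize (fun x => normal_pdf m s x * normal_pdf x v y `^ c)
  = normal_pdf (m * (S / s) ^+ 2 + c * y * (S / v) ^+ 2) S.
Proof.
move=> s_gt0 v_gt0 c_ge0 S.
have [s_neq0 v_neq0] : s != 0 /\ v != 0 by rewrite !gt_eqF.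
have a_gt0 : 0 < s ^-2 + c / v ^+ 2.
  by rewrite ltr_wpDr ?divr_ge0 ?sqr_ge0 ?invr_gt0 ?exprn_gt0.
have -> : (fun x => normal_pdf m s x * normal_pdf x v y `^ c)
  = (fun x => expR (ln (normal_peak s) + c * ln (normal_peak v)
       - m ^+ 2 / (2 * s ^+ 2) - c * y ^+ 2 / (2 * v ^+ 2)
       - ((s ^-2 + c / v ^+ 2) * x ^+ 2 - 2 * (m / s ^+ 2 + c * y / v ^+ 2) * x) / 2)).
  apply/funext => x.
  rewrite -[normal_pdf m s x]lnK ?posrE ?normal_pdf_gt0// /powR gt_eqF ?normal_pdf_gt0//.
  by rewrite -expRD !ln_normal_pdf//; congr expR; field; rewrite s_neq0 v_neq0.
rewrite normalize_expR_quadratic//; congr normal_pdf.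
rewrite !exprMn powR_Nhalf_sqr//; field.
by rewrite v_neq0 s_neq0 gt_eqF// ltr_wpDr ?exprn_gt0// mulr_ge0 ?sqr_ge0.
Qed.

Lemma normalize_normal_geomean (R : realType) (n : nat) (w m s : 'I_n -> R) :
  (forall j, 0 < s j) -> 0 < \sum_j w j * s j ^-2 ->
  let S := (\sum_j w j * s j ^-2) `^ (- 2^-1) in
  normalize (fun x => expR (\sum_j w j * ln (normal_pdf (m j) (s j) x)))
  = normal_pdf (S ^+ 2 * \sum_j w j * (m j / s j ^+ 2)) S.
Proof.
move=> s_gt0 a_gt0 S.
have -> : (fun x => expR (\sum_j w j * ln (normal_pdf (m j) (s j) x)))
  = (fun x => expR (\sum_j w j * (ln (normal_peak (s j)) - m j ^+ 2 / (2 * s j ^+ 2))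
       - ((\sum_j w j * s j ^-2) * x ^+ 2 - 2 * (\sum_j w j * (m j / s j ^+ 2)) * x) / 2)).
  apply/funext => x; congr expR.
  rewrite !mulr_suml mulr_sumr !mulr_suml -!sumrB mulr_suml -sumrB.
  apply: eq_bigr => j _.
  have s_neq0 : s j != 0 by rewrite gt_eqF.
  by rewrite ln_normal_pdf//; field.
by rewrite normalize_expR_quadratic// powR_Nhalf_sqr// mulrC.
Qed.

Lemma convex_comb_gt0 (R : numFieldType) (n : nat) (w f : 'I_n -> R) :
  (forall j, 0 <= w j) -> \sum_j w j = 1 -> (forall j, 0 < f j) ->
  0 < \sum_j w j * f j.
Proof.
move=> w_ge0 w_sum1 f_gt0.
have wf_ge0 j : 0 <= w j * f j by exact: mulr_ge0 (w_ge0 j) (ltW (f_gt0 j)).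
rewrite lt_def sumr_ge0 ?andbT => [|j _]; last exact: wf_ge0.
apply: (contra_neq _ (oner_neq0 R)) => /(psumr_eq0P (fun j _ => wf_ge0 j)) wf0.
rewrite -w_sum1 big1// => j _.
by have /eqP := wf0 j isT; rewrite mulf_eq0 (gt_eqF (f_gt0 j)) orbF => /eqP.
Qed.

Section GaussianUpdates.
Context {R : realType} {N K : nat} {W : 'M[R]_N} {sigma eta mu0 sigma0 : R}
  {pol : nat -> 'I_N -> ('I_K -> R -> R) -> 'I_K} {Y : nat -> 'I_N -> R}.
Hypotheses (W_ge0 : forall i j, 0 <= W i j) (W_row1 : forall i, \sum_j W i j = 1)
  (sigma_gt0 : 0 < sigma) (eta_gt0 : 0 < eta) (sigma0_gt0 : 0 < sigma0).

Local Notation prior := (normal_pdf mu0 sigma0).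
Local Notation qs := (qseq W sigma eta pol Y prior).
Local Notation ps := (pseq W sigma eta pol Y prior mu0 sigma0).
Local Notation stil := (sigtil W sigma eta pol Y prior).
Local Notation mtil := (mutil W sigma eta pol Y prior).

Definition normal_state (q : state R N K) (p : param R N K) :=
  forall i k, q i k = normal_pdf (p.1 i k) (p.2 i k) /\ 0 < p.2 i k.

Lemma sigtil_gt0 t (p : param R N K) i k : 0 < p.2 i k -> 0 < stil t p i k.
Proof.
move=> s_gt0; apply: powR_gt0; rewrite ltr_wpDr ?invr_gt0 ?exprn_gt0//.
have ind_ge0 b : 0 <= ind R b by case: b.
by rewrite divr_ge0 ?sqr_ge0 ?mulr_ge0 ?ind_ge0 ?ltW.
Qed.

Lemma qtilde_normal t (p : param R N K) : normal_state (qs t) p ->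
  qtilde sigma eta pol Y t (qs t) = fun i k => normal_pdf (mtil t p i k) (stil t p i k).
Proof.
move=> qp; apply/funext => i; apply/funext => k; have [q_eq s_gt0] := qp i k.
rewrite /qtilde /mutil /sigtil /ind eq_sym q_eq.
case: eqP => _; rewrite ?mulr1 ?mulr0 ?mul0r ?addr0.
  by rewrite normalize_normal_tempered// ltW.
by rewrite powR_Nhalf_Vsqr// divff ?gt_eqF// expr1n mulr1.
Qed.

Lemma qnext_normal t (p : param R N K) : normal_state (qs t) p ->
  normal_state (qnext W sigma eta pol Y t (qs t)) (param_next W sigma eta pol Y prior t p).
Proof.
move=> qp i k.
have stil_gt0 j : 0 < stil t p j k by apply: sigtil_gt0; have [] := qp j k.
have prec_gt0 : 0 < \sum_j W i j * (stil t p j k) ^-2.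
  by apply: convex_comb_gt0 => // j; rewrite invr_gt0 exprn_gt0.
split; last exact: powR_gt0.
rewrite /qnext (qtilde_normal _ _ qp) /=.
exact: (normalize_normal_geomean _ _ (W i) (fun j => mtil t p j k) (fun j => stil t p j k)).
Qed.

Lemma qseq_normal t : (1 <= t)%N -> normal_state (qs t) (ps t).
Proof.
elim: t => [//|[_ _ i k|t IH _]]; first by split.
exact: qnext_normal (IH isT).
Qed.

End GaussianUpdates.

Theorem lemma2 (R : realType) (N K : nat) (W : 'M[R]_N) (G : rel 'I_N)
  (sigma eta mu0 sigma0 : R)
  (pol : nat -> 'I_N -> ('I_K -> R -> R) -> 'I_K) (Y : nat -> 'I_N -> R) :
  respects_graph W G -> 0 < sigma -> 0 < eta -> 0 < sigma0 ->
  let prior := normal_pdf mu0 sigma0 in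
  forall (t : nat) (i : 'I_N) (k : 'I_K), (1 <= t)%N ->
    let q := qseq W sigma eta pol Y prior t in
    let p := pseq W sigma eta pol Y prior mu0 sigma0 t in
    (forall th, qtilde sigma eta pol Y t q i k th
                = normal_pdf (mutil W sigma eta pol Y prior t p i k)
                             (sigtil W sigma eta pol Y prior t p i k) th) /\
    (forall th, qseq W sigma eta pol Y prior t.+1 i k th
                = normal_pdf ((pseq W sigma eta pol Y prior mu0 sigma0 t.+1).1 i k)
                             ((pseq W sigma eta pol Y prior mu0 sigma0 t.+1).2 i k) th).
Proof.
move=> [W_ge0 [W_row1 _]] sigma_gt0 eta_gt0 sigma0_gt0 prior t i k t_ge1 q p.
have qs_normal := qseq_normal (pol:=pol) (Y:=Y) (mu0:=mu0)
  W_ge0 W_row1 sigma_gt0 eta_gt0 sigma0_gt0.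
split=> th; last by have [-> _] := qs_normal t.+1 isT i k.
by rewrite (qtilde_normal sigma_gt0 eta_gt0 _ _ (qs_normal t t_ge1)).
Qed.
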